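(* There exists a two-way optical interference automaton (2OIA) that recognizes the language $L_{eq}=\{a^nb^n\mid n\in\mathbb{N}\}$ in time linear in the length of the input.
   Context: A two-way optical interference automaton (2OIA) is a deterministic machine with finite state set $Q$, start state $q_0$, accepting and rejecting states, finite input alphabet $\Sigma$, and tape alphabet $\Gamma=\Sigma\cup\{\text{¢},\$\}$. On input $w=w_1\cdots w_n$ the read-only tape holds ¢$w_1\cdots w_n\$$ in cells $0,1,\dots,n+1$, scanned by a two-way head. For each cell $m$ there is a monochromatic point light source at the point $(m,0)$ of the plane; all sources have the same wavelength $\lambda$ and the same initial amplitude $A_0$, and each source is at any moment either switched off or switched on with initial phase $0$ or $\pi$. A detector is located at a grid point $(j,k)$ with $j,k\in\{0,\tfrac12,1,\tfrac32,\dots,n+1\}$, pointing towards the source array; its field of vision is the cone making angle $\pi/4$ with the vertical line through it, so it sees exactly the sources at $(m,0)$ with $|m-j|\le k$. The resultant wave at the detector is $\sum A_0 r_m^{-1}e^{i(\phi_m+2\pi r_m/\lambda)}$, summed over the switched-on sources it sees, where $r_m$ is the distance from the source to the detector and $\phi_m\in\{0,\pi\}$ the source's phase; the detector outputs $\underline{1}$ if this resultant is nonzero and $\underline{0}$ otherwise. The transition function $\delta:Q\times\Gamma\times\{\underline0,\underline1\}\to Q\times\{\text{left},\text{right},\text{stay}\}\times\{\text{left},\text{right},\text{up},\text{down},\text{stay}\}\times\{\mathrm{toggle}(0),\mathrm{toggle}(\pi),-\}$ maps (state, scanned symbol, detector output) to a new state, a move of the head by one cell, a move of the detector by one grid step (of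 length $1/2$), and an action on the source of the currently scanned cell: $\mathrm{toggle}(\phi)$ switches it on with phase $\phi$ if it is off and switches it off if it is on; $-$ does nothing. Initially all sources are off, the machine is in $q_0$, the head is on cell $0$, and the detector is at a prescribed initial grid position. For a given source, a maximal sequence of toggles at consecutive time steps is called non-transient if its length is odd; there is a constant $k$ such that the machine crashes if it attempts a non-transient toggle sequence on a single source for the $(k+1)$-th time. The machine accepts when it is in an accepting state with detector output $\underline0$. Its running time is the total number of moves made by the head plus the number of moves made by the detector. A 2OIA recognizes a language $L$ if it accepts every input in $L$ and rejects every input not in $L$. *)

From Stdlib Require Import Reals.
From mathcomp Require Import all_boot.

Set Implicit Arguments.
Unset Strict Implicit.
Unset Printing Implicit Defensive.

Inductive tsym (Sigma : Type) : Type :=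
  | LEnd
  | REnd
  | Inp of Sigma.
Arguments LEnd {Sigma}.
Arguments REnd {Sigma}.

Inductive hmove : Type := HLeft | HRight | HStay.
Inductive dmove : Type := DLeft | DRight | DUp | DDown | DStay.
Inductive phase : Type := Ph0 | PhPi.
Inductive action : Type := Toggle of phase | NoAct.
Inductive src : Type := Off | On of phase.

(** The detector position is
    stored in doubled coordinates: grid point (j,k) = (J/2, K/2), so a
    grid step of length 1/2 changes J or K by 1.  [det0] is the
    prescribed initial detector position (doubled coordinates),
    [kcr] the crash constant k. *)
Record OIA (Sigma : Type) := MkOIA {
  Q : finType;
  q0 : Q;
  qacc : pred Q;
  qrej : pred Q;
  acc_rej_disj : forall q, ~~ (qacc q && qrej q);
  delta : Q -> tsym Sigma -> bool -> Q * hmove * dmove * action;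
  kcr : nat;
  det0 : nat * nat
}.

Arguments Q {Sigma} o.
Arguments q0 {Sigma} o.
Arguments qacc {Sigma} o _.
Arguments qrej {Sigma} o _.
Arguments delta {Sigma} o _ _ _.
Arguments kcr {Sigma} o.
Arguments det0 {Sigma} o.

(** Configurations. [crun = Some (m, l)]: source m was toggled at each
    of the last l consecutive time steps (the current maximal toggle
    sequence); [ccnt m] = number of completed non-transient (odd length)
    toggle sequences on source m; [ctime] = running time so far
    (head moves + detector moves). *)
Record config (Q : Type) := Cfg {
  cst : Q;
  chead : nat;
  cJ : nat;
  cK : nat;
  csrc : nat -> src;
  crun : option (nat * nat);
  ccnt : nat -> nat;
  ctime : nat
}.

Section Physics.
Local Open Scope R_scope.
Definition phase_val (p : phase) : R := match p with Ph0 => 0 | PhPi => PI end.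

(** the detector at (J/2, K/2) sees the source at (m, 0) iff |m - J/2| <= K/2 *)
Definition visible (J K m : nat) : bool := ((J <= 2 * m + K) && (2 * m <= J + K))%N.

Definition dist (J K m : nat) : R :=
  sqrt ((INR m - INR J / 2) ^ 2 + (INR K / 2) ^ 2).

(** real and imaginary parts of A0 r^-1 e^{i(phi + 2 pi r / lambda)} *)
Definition re_term (lam A0 : R) (J K : nat) (s : nat -> src) (m : nat) : R :=
  if visible J K m then
    match s m with
    | Off => 0
    | On p => (A0 / dist J K m * cos (phase_val p + 2 * PI * dist J K m / lam))
    end
  else 0.

Definition im_term (lam A0 : R) (J K : nat) (s : nat -> src) (m : nat) : R :=
  if visible J K m then
    match s m with
    | Off => 0
    | On p => (A0 / dist J K m * sin (phase_val p + 2 * PI * dist J K m / lam))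
    end
  else 0.

Definition res_re lam A0 (n J K : nat) s : R :=
  foldr Rplus 0 [seq re_term lam A0 J K s m | m <- iota 0 n.+2].
Definition res_im lam A0 (n J K : nat) s : R :=
  foldr Rplus 0 [seq im_term lam A0 J K s m | m <- iota 0 n.+2].

End Physics.

(** Convention for the degenerate height k = 0 (the detector
    sits on the source array and can only see the source directly below
    it, at distance 0): output 1 iff that source is switched on. *)
Definition detect lam A0 (n J K : nat) (s : nat -> src) : bool :=
  if K == 0 then
    (~~ odd J) && (if s J./2 is On _ then true else false)
  else
    if Req_EM_T (res_re lam A0 n J K s) R0 then
      (if Req_EM_T (res_im lam A0 n J K s) R0 then false else true)
    else true.

Fixpoint nth_opt (T : Type) (w : seq T) (i : nat) : option T :=
  match w, i with
  | [::], _ => None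
  | x :: _, 0 => Some x
  | _ :: w', i'.+1 => nth_opt w' i'
  end.

(** tape content: cell 0 = ¢, cells 1..n = w, cell n+1 = $ *)
Definition tape (Sigma : Type) (w : seq Sigma) (i : nat) : tsym Sigma :=
  if i is i'.+1 then (if nth_opt w i' is Some x then Inp x else REnd) else LEnd.

Definition toggle (p : phase) (s : src) : src :=
  match s with Off => On p | On _ => Off end.

Definition close_run (run : option (nat * nat)) (cnt : nat -> nat) : nat -> nat :=
  match run with
  | Some (m, l) => if odd l then (fun x => if x == m then (cnt x).+1 else cnt x) else cnt
  | None => cnt
  end.

Section Sem.
Variables (Sigma : Type) (M : OIA Sigma) (lam A0 : R) (w : seq Sigma).
Let n := size w.

Definition halted (c : config (Q M)) : bool := qacc M (cst c) || qrej M (cst c).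

Definition output (c : config (Q M)) : bool := detect lam A0 n (cJ c) (cK c) (csrc c).

(** one step; [None] = crash (toggle limit exceeded, or a move leaving
    the tape / the detector grid).  Halted configurations are fixed. *)
Definition step (c : config (Q M)) : option (config (Q M)) :=
  if halted c then Some c else
  let h := chead c in
  match delta M (cst c) (tape w h) (output c) with
  | (q', hm, dm, act) =>
    let src' := match act with
                | NoAct => csrc c
                | Toggle p => fun m => if m == h then toggle p (csrc c m) else csrc c m
                end in
    let rc := match act with
              | Toggle _ =>
                  match crun c with
                  | Some (m, l) => if m == h then (Some (h, l.+1), ccnt c)
                                   else (Some (h, 1), close_run (crun c) (ccnt c))
                  | None => (Some (h, 1), ccnt c)
                  end
              | NoAct => (None, close_run (crun c) (ccnt c))
              end in
    let crash := match crun c with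
                 | Some (m, _) => kcr M < rc.2 m
                 | None => false
                 end in
    let nh := match hm with
              | HLeft => if h is h'.+1 then Some h' else None
              | HRight => if h < n.+1 then Some h.+1 else None
              | HStay => Some h
              end in
    let nJ := match dm with
              | DLeft => if cJ c is J'.+1 then Some J' else None
              | DRight => if cJ c < (n.+1).*2 then Some (cJ c).+1 else None
              | _ => Some (cJ c)
              end in
    let nK := match dm with
              | DDown => if cK c is K'.+1 then Some K' else None
              | DUp => if cK c < (n.+1).*2 then Some (cK c).+1 else None
              | _ => Some (cK c)
              end in
    let dt := (if hm is HStay then 0 else 1) + (if dm is DStay then 0 else 1) in
    if crash then None else
    match nh, nJ, nK with
    | Some h2, Some J2, Some K2 =>
        Some (Cfg q' h2 J2 K2 src' rc.1 rc.2 (ctime c + dt))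
    | _, _, _ => None
    end
  end.

Definition init : option (config (Q M)) :=
  if (det0 M).1 <= (n.+1).*2 then
    if (det0 M).2 <= (n.+1).*2 then
      Some (Cfg (q0 M) 0 (det0 M).1 (det0 M).2 (fun _ => Off) None (fun _ => 0) 0)
    else None
  else None.

Definition exec (t : nat) : option (config (Q M)) :=
  iter t (fun oc => if oc is Some c then step c else None) init.

Definition accepting (c : config (Q M)) : bool := qacc M (cst c) && ~~ output c.

End Sem.

Inductive letter : Type := La | Lb.
Definition Leq (w : seq letter) : Prop := exists n, w = nseq n La ++ nseq n Lb.

Arguments halted {Sigma} M c.
Arguments output {Sigma} M lam A0 w c.
Arguments step {Sigma} M lam A0 w c.
Arguments init {Sigma} M w.
Arguments exec {Sigma} M lam A0 w t.
Arguments accepting {Sigma} M lam A0 w c.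

(** The detector is kept at height 0, where it sees only the source directly
    beneath it.  Once the source under ¢ is switched on, the output is 1
    exactly when the detector stands above cell 0, so the detector's abscissa
    is a counter with a zero test.  In one left-to-right sweep the automaton
    moves the detector right on every a and left on every b, rejecting if the
    counter hits 0 too early or an a follows a b, and at $ accepts iff the
    counter is 0.  Each cell costs at most two moves, hence linear time. *)

From Stdlib Require Import Reals.
From HB Require Import structures.
From mathcomp Require Import all_boot zify.

Set Implicit Arguments.
Unset Strict Implicit.
Unset Printing Implicit Defensive.

Definition eq_letter (x y : letter) : bool :=
  match x, y with La, La | Lb, Lb => true | _, _ => false end.

Lemma eq_letterP : Equality.axiom eq_letter.
Proof. by do 2 case; constructor. Qed.

HB.instance Definition _ := hasDecEq.Build letter eq_letterP.

Lemma take_find_predC1 (T : eqType) (x : T) (s : seq T) :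
  take (find (predC1 x) s) s = nseq (find (predC1 x) s) x.
Proof.
have /all_pred1P -> : all (pred1 x) (take (find (predC1 x) s) s).
  by rewrite -[all _ _]negbK -has_predC has_take_leq ?find_size ?ltnn.
by rewrite size_take_min (minn_idPl (find_size _ _)).
Qed.

Section Blocks.
Variable w : seq letter.

Definition a_prefix_len := find (predC1 La) w.
Definition b_block_len := find (predC1 Lb) (drop a_prefix_len w).

Local Notation i := a_prefix_len.
Local Notation j := b_block_len.

Lemma a_prefix_b_block_le : i + j <= size w.
Proof. by rewrite -leq_subRL ?find_size // -size_drop find_size. Qed.

Lemma nseq_blocks_drop : w = nseq i La ++ nseq j Lb ++ drop (i + j) w.
Proof.
rewrite -take_find_predC1 -[in drop _ _]addnC -drop_drop -take_find_predC1.
by rewrite !cat_take_drop.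
Qed.

Lemma nth_a_prefix p : p < i -> nth La w p = La.
Proof. by move=> /(before_find La) /negbFE /eqP. Qed.

Lemma nth_b_block p : p < j -> nth La w (i + p) = Lb.
Proof. by rewrite -nth_drop => /(before_find La) /negbFE /eqP. Qed.

Lemma nth_a_prefix_end : i < size w -> nth La w i = Lb.
Proof. by rewrite -has_find => /(nth_find La); case: nth. Qed.

Lemma nth_b_block_end : i + j < size w -> nth La w (i + j) = La.
Proof.
rewrite -ltn_subRL -size_drop -has_find => /(nth_find La).
by rewrite nth_drop; case: nth.
Qed.

Lemma LeqE : Leq w <-> (i == j) && (i + j == size w).
Proof.
split=> [[m w_eq] | /andP [/eqP eq_ij /eqP size_w]].
- have i_m : i = m.
    rewrite /a_prefix_len w_eq find_cat has_nseq /= andbF size_nseq.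
    by rewrite find_nseq /= !addn0.
  have j_m : j = m.
    by rewrite /b_block_len i_m w_eq drop_size_cat ?size_nseq // find_nseq /= mul1n.
  by rewrite i_m j_m w_eq size_cat !size_nseq !eqxx.
- by exists i; rewrite [LHS]nseq_blocks_drop size_w drop_size cats0 -eq_ij.
Qed.

End Blocks.

Lemma tape_inp (w : seq letter) p : p < size w -> tape w p.+1 = Inp (nth La w p).
Proof. by rewrite /tape; elim: w p => [|x w IHw] [|p] //= /IHw. Qed.

Lemma tape_REnd (w : seq letter) : tape w (size w).+1 = REnd.
Proof. by rewrite /tape; elim: w. Qed.

Inductive state := Start | Leave | ScanA | ScanB | Accept | Reject.

Definition ord_of_state (q : state) : 'I_6 :=
  inord (match q with
         | Start => 0 | Leave => 1 | ScanA => 2 | ScanB => 3 | Accept => 4 | Reject => 5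
         end).

Definition state_of_ord (k : 'I_6) : state :=
  match val k with
  | 0 => Start | 1 => Leave | 2 => ScanA | 3 => ScanB | 4 => Accept | _ => Reject
  end.

Lemma ord_of_stateK : cancel ord_of_state state_of_ord.
Proof. by case; rewrite /state_of_ord /ord_of_state /= inordK. Qed.

HB.instance Definition _ := Finite.copy state (can_type ord_of_stateK).

Definition trans (q : state) (s : tsym letter) (o : bool) :
    state * hmove * dmove * action :=
  match q, s with
  | Start, _ => (Leave, HStay, DStay, Toggle Ph0)
  | Leave, _ => (ScanA, HRight, DStay, NoAct)
  | ScanA, Inp La => (ScanA, HRight, DRight, NoAct)
  | ScanA, Inp Lb | ScanA, REnd => (ScanB, HStay, DStay, NoAct)
  | ScanB, Inp Lb =>
      if o then (Reject, HStay, DStay, NoAct) else (ScanB, HRight, DLeft, NoAct)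
  | ScanB, REnd =>
      (* accepting needs output 0, hence the final detector move *)
      if o then (Accept, HStay, DRight, NoAct) else (Reject, HStay, DStay, NoAct)
  | _, _ => (Reject, HStay, DStay, NoAct)
  end.

Definition is_accept (q : state) : bool := if q is Accept then true else false.
Definition is_reject (q : state) : bool := if q is Reject then true else false.

Lemma accept_reject_disj q : ~~ (is_accept q && is_reject q).
Proof. by case: q. Qed.

Definition oia_Leq : OIA letter :=
  @MkOIA letter state Start is_accept is_reject accept_reject_disj trans 1 (0, 0).

Definition cent_lit : nat -> src := fun m => if m == 0 then On Ph0 else Off.

(* [J] is the counter; the single toggle of the source under ¢ is the only
   non-transient toggle sequence the run ever performs. *)
Definition counter_cfg (q : state) (h J tm : nat) : config (Q oia_Leq) :=
  Cfg (q : Q oia_Leq) h J 0 cent_lit None (fun m => if m == 0 then 1 else 0) tm.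

Section Run.
Variables (lam A0 : R) (w : seq letter).
Local Notation n := (size w).

Definition run (k : nat) (c : config (Q oia_Leq)) : option (config (Q oia_Leq)) :=
  iter k (fun oc => if oc is Some c' then step oia_Leq lam A0 w c' else None)
    (Some c).

Lemma exec_add t k c :
  exec oia_Leq lam A0 w t = Some c -> exec oia_Leq lam A0 w (k + t) = run k c.
Proof. by rewrite /exec iterD => ->. Qed.

Lemma exec_switch_on : exec oia_Leq lam A0 w 2 = Some (counter_cfg ScanA 1 0 1).
Proof. by []. Qed.

Lemma output_cfg q h J tm :
  output oia_Leq lam A0 w (counter_cfg q h J tm) = (J == 0).
Proof. by rewrite /output /detect /=; case: J => [|[|J]] //=; case: odd. Qed.

Lemma step_scanA_a h J tm :
  tape w h = Inp La -> h <= n -> J < n.+1.*2 ->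
  step oia_Leq lam A0 w (counter_cfg ScanA h J tm) =
    Some (counter_cfg ScanA h.+1 J.+1 (tm + 2)).
Proof.
by move=> tape_h h_le J_lt; rewrite /step /halted output_cfg tape_h /= ltnS h_le J_lt.
Qed.

Lemma step_scanA_end h J tm :
  tape w h.+1 <> Inp La ->
  step oia_Leq lam A0 w (counter_cfg ScanA h.+1 J tm) =
    Some (counter_cfg ScanB h.+1 J tm).
Proof.
rewrite /step /halted output_cfg /tape /=.
by case: nth_opt => [[]|] //= _; rewrite !addn0.
Qed.

Lemma step_scanB_b h J tm :
  tape w h = Inp Lb -> h <= n ->
  step oia_Leq lam A0 w (counter_cfg ScanB h J.+1 tm) =
    Some (counter_cfg ScanB h.+1 J (tm + 2)).
Proof. by move=> tape_h h_le; rewrite /step /halted output_cfg tape_h /= ltnS h_le. Qed.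

Lemma step_scanB_zero h tm :
  tape w h = Inp Lb ->
  step oia_Leq lam A0 w (counter_cfg ScanB h 0 tm) =
    Some (counter_cfg Reject h 0 tm).
Proof. by move=> tape_h; rewrite /step /halted output_cfg tape_h /= !addn0. Qed.

Lemma step_scanB_a h J tm :
  tape w h = Inp La ->
  step oia_Leq lam A0 w (counter_cfg ScanB h J tm) =
    Some (counter_cfg Reject h J tm).
Proof. by move=> tape_h; rewrite /step /halted output_cfg tape_h /= !addn0. Qed.

Lemma step_scanB_end h J tm :
  tape w h = REnd ->
  step oia_Leq lam A0 w (counter_cfg ScanB h J tm) =
    Some (if J == 0 then counter_cfg Accept h 1 (tm + 1)
          else counter_cfg Reject h J tm).
Proof.
by move=> tape_h; rewrite /step /halted output_cfg tape_h; case: J => /=; rewrite ?addn0.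
Qed.

Lemma runS k c :
  run k.+1 c = if run k c is Some c' then step oia_Leq lam A0 w c' else None.
Proof. by []. Qed.

Lemma run_scanA h J tm k :
  (forall p, p < k -> tape w (h + p) = Inp La) -> h + k <= n.+1 -> J + k <= n.+1.*2 ->
  run k (counter_cfg ScanA h J tm) =
    Some (counter_cfg ScanA (h + k) (J + k) (tm + 2 * k)).
Proof.
elim: k => [|k IHk] tape_a h_le J_le; first by rewrite !addn0.
rewrite runS IHk => [|p p_lt||]; [|apply: tape_a; lia|lia|lia].
rewrite step_scanA_a ?tape_a //; [congr (Some (counter_cfg _ _ _ _)) | |]; lia.
Qed.

Lemma run_scanB h J tm k :
  (forall p, p < k -> tape w (h + p) = Inp Lb) -> h + k <= n.+1 -> k <= J ->
  run k (counter_cfg ScanB h J tm) =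
    Some (counter_cfg ScanB (h + k) (J - k) (tm + 2 * k)).
Proof.
elim: k => [|k IHk] tape_b h_le k_le; first by rewrite !addn0 subn0.
rewrite runS IHk => [|p p_lt||]; [|apply: tape_b; lia|lia|lia].
have -> : J - k = (J - k.+1).+1 by lia.
rewrite step_scanB_b ?tape_b //; [congr (Some (counter_cfg _ _ _ _)) |]; lia.
Qed.

End Run.

Lemma accepting_cfg lam A0 w q h J tm :
  accepting oia_Leq lam A0 w (counter_cfg q h J tm) = is_accept q && (J != 0).
Proof. by rewrite /accepting output_cfg. Qed.

Section Decide.
Variables (lam A0 : R) (w : seq letter).
Local Notation n := (size w).
Local Notation i := (a_prefix_len w).
Local Notation j := (b_block_len w).
Local Notation m := (minn i j).

Lemma tape_a_prefix p : p < i -> tape w (1 + p) = Inp La.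
Proof.
move=> p_lt; have le_ij := a_prefix_b_block_le w.
by rewrite add1n tape_inp ?nth_a_prefix //; lia.
Qed.

Lemma tape_a_prefix_end : tape w (1 + i) <> Inp La.
Proof.
have [i_lt | i_ge] := ltnP i n; first by rewrite add1n tape_inp ?nth_a_prefix_end.
have -> : i = n by have := a_prefix_b_block_le w; lia.
by rewrite add1n tape_REnd.
Qed.

Lemma tape_b_block p : p < j -> tape w (1 + i + p) = Inp Lb.
Proof.
move=> p_lt; have le_ij := a_prefix_b_block_le w.
by rewrite -addnA add1n tape_inp ?nth_b_block //; lia.
Qed.

Lemma exec_scanB_done :
  exec oia_Leq lam A0 w (m + (1 + (i + 2))) =
    Some (counter_cfg ScanB (1 + i + m) (i - m) (1 + 2 * i + 2 * m)).
Proof.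
have le_ij := a_prefix_b_block_le w.
have scanA_done : exec oia_Leq lam A0 w (i + 2) =
    Some (counter_cfg ScanA (1 + i) (0 + i) (1 + 2 * i)).
  rewrite (exec_add _ (exec_switch_on _ _ _)) run_scanA //; [| lia | lia].
  exact: tape_a_prefix.
have scanB_start : exec oia_Leq lam A0 w (1 + (i + 2)) =
    Some (counter_cfg ScanB (1 + i) i (1 + 2 * i)).
  by rewrite (exec_add _ scanA_done) /run /= step_scanA_end //; exact: tape_a_prefix_end.
rewrite (exec_add _ scanB_start) run_scanB //; [| lia | lia].
by move=> p p_lt; apply: tape_b_block; lia.
Qed.

Lemma step_scanB_done tm : exists c,
  step oia_Leq lam A0 w (counter_cfg ScanB (1 + i + m) (i - m) tm) = Some c /\
  halted oia_Leq c /\ ctime c <= tm + 1 /\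
  accepting oia_Leq lam A0 w c = (i == j) && (i + j == n).
Proof.
have le_ij := a_prefix_b_block_le w.
have [i_lt_j | j_le_i] := ltnP i j.
  exists (counter_cfg Reject (1 + i + i) 0 tm).
  rewrite subnn step_scanB_zero ?tape_b_block // accepting_cfg (ltn_eqF i_lt_j).
  by do !split=> //=; rewrite leq_addr.
have [ij_lt | ij_ge] := ltnP (i + j) n.
  exists (counter_cfg Reject (1 + i + j) (i - j) tm).
  rewrite step_scanB_a; last by rewrite -addnA add1n tape_inp ?nth_b_block_end.
  rewrite accepting_cfg (ltn_eqF ij_lt) andbF andFb.
  by do !split=> //=; rewrite leq_addr.
have ij_eq : i + j = n by lia.
rewrite step_scanB_end; last by rewrite -addnA add1n ij_eq tape_REnd.
rewrite ij_eq eqxx andbT subn_eq0 eqn_leq j_le_i andbT.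
by case: leqP => _; eexists; do !split=> //=; rewrite ?accepting_cfg ?leq_addr.
Qed.

Lemma oia_Leq_decides : exists t c,
  exec oia_Leq lam A0 w t = Some c /\ halted oia_Leq c /\
  ctime c <= 2 * n + 2 /\
  accepting oia_Leq lam A0 w c = (i == j) && (i + j == n).
Proof.
have [c [step_c [halted_c [time_c accepting_c]]]] :=
  step_scanB_done (1 + 2 * i + 2 * m).
exists (1 + (m + (1 + (i + 2)))), c.
rewrite (exec_add _ exec_scanB_done); do !split=> //.
by have := a_prefix_b_block_le w; lia.
Qed.

End Decide.

Theorem corollary1 :
  forall lam A0 : R, Rlt R0 lam -> Rlt R0 A0 ->
  exists (M : OIA letter) (C : nat),
    forall w : seq letter,
      exists (t : nat) (c : config (Q M)),
        exec M lam A0 w t = Some c /\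
        halted M c /\
        ctime c <= C * size w + C /\
        (accepting M lam A0 w c <-> Leq w).
Proof.
move=> lam A0 _ _; exists oia_Leq, 2 => w.
have [t [c [exec_c [halted_c [time_c accepting_c]]]]] := oia_Leq_decides lam A0 w.
by exists t, c; rewrite accepting_c LeqE.
Qed.
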